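(* Let $f=e^{-\psi}\colon\mathbb R^d\to[0,\infty)$ be an upper semi-continuous log-concave function, $u\in\operatorname{supp}f$, $v\in\mathbb R^d$, $\nu\in\mathbb R$. Then $(v,\nu)\in N_{\operatorname{epi}\psi}((u,\psi(u)))$ if and only if $\bigl(v,-\nu/f(u)\bigr)\in N_{\mathrm{lift}(f)}((u,f(u)))$. Furthermore, $P_d\bigl(N_{\mathrm{lift}(f)}((u,f(u)))\bigr)\subseteq N_{[f\ge f(u)]}(u)$.
   Context: $\operatorname{supp}f=\{x:f(x)>0\}$; $\operatorname{epi}\psi=\{(x,\xi):\psi(x)<\infty,\xi\ge\psi(x)\}$. Lifting $\mathrm{lift}(f)=\{(x,y)\in\mathbb R^d\times\mathbb R:x\in\overline{\operatorname{supp}f},|y|\le f(x)\}$. Fréchet normal cone of $A\subset\mathbb R^n$ at $a_0\in A$: $N_A(a_0)=\{v:\forall\varepsilon>0\,\exists\delta>0:\langle v,a-a_0\rangle\le\varepsilon|a-a_0|\ \forall a\in A,|a-a_0|\le\delta\}$. $[f\ge t]=\{x:f(x)\ge t\}$. $P_d\colon\mathbb R^{d+1}\to\mathbb R^d$ is the orthogonal projection onto the first $d$ coordinates. *)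

From HB Require Import structures.
From mathcomp Require Import all_boot all_order all_algebra.
From mathcomp Require Import all_classical all_reals all_analysis.
Set Implicit Arguments. Unset Strict Implicit. Unset Printing Implicit Defensive.
Import Order.TTheory GRing.Theory Num.Theory.
Import numFieldNormedType.Exports.
Local Open Scope classical_set_scope.
Local Open Scope ring_scope.

Section Defs.
Variable R : realType.

Definition dotv n (x y : 'rV[R]_n) : R := \sum_(i < n) x 0 i * y 0 i.
Definition enorm n (x : 'rV[R]_n) : R := Num.sqrt (dotv x x).

Definition normal_cone n (A : set 'rV[R]_n) (a0 : 'rV[R]_n) : set 'rV[R]_n :=
  [set v | forall eps : R, 0 < eps -> exists2 delta : R, 0 < delta &
     forall a, A a -> enorm (a - a0) <= delta ->
       dotv v (a - a0) <= eps * enorm (a - a0)].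

Definition pt d (x : 'rV[R]_d) (y : R) : 'rV[R]_(d + 1) :=
  row_mx x (\row_(j < 1) y).

Definition Pd d (z : 'rV[R]_(d + 1)) : 'rV[R]_d := lsubmx z.

Definition supp_fun d (f : 'rV[R]_d -> R) : set 'rV[R]_d := [set x | 0 < f x].

Definition superlevel d (f : 'rV[R]_d -> R) (t : R) : set 'rV[R]_d :=
  [set x | t <= f x].

Definition psi_of d (f : 'rV[R]_d -> R) (x : 'rV[R]_d) : \bar R :=
  if 0 < f x then (- ln (f x))%:E else +oo%E.

Definition epigraph d (psi : 'rV[R]_d -> \bar R) : set 'rV[R]_(d + 1) :=
  [set z | exists x xi, z = pt x xi /\ (psi x < +oo)%E /\ (psi x <= xi%:E)%E].

Definition liftf d (f : 'rV[R]_d -> R) : set 'rV[R]_(d + 1) :=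
  [set z | exists x y, z = pt x y /\ closure (supp_fun f) x /\ `|y| <= f x].

Definition usc_fun d (f : 'rV[R]_d -> R) : Prop :=
  forall x (eps : R), 0 < eps -> \forall y \near x, f y < f x + eps.

Definition log_concave d (f : 'rV[R]_d -> R) : Prop :=
  (forall x, 0 <= f x) /\
  forall x y (t : R), 0 <= t -> t <= 1 ->
    f x `^ (1 - t) * f y `^ t <= f ((1 - t) *: x + t *: y).

End Defs.

(** The map (x, xi) |-> (x, e^(-xi)) carries the epigraph of psi = -ln f onto
    the part of lift(f) lying above 0, which is a neighbourhood of (u, f u)
    in lift(f) because f u > 0.  It acts only on the last coordinate, with
    derivative -f(u) at (u, psi u), and its inverse y |-> -ln y has
    derivative -1/f(u) at f(u); both have quadratic Taylor remainders.
    Fréchet normal cones are transported by such maps through the transpose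
    of the derivative, which gives the two implications.  Finally every
    point x of [f >= f u] gives the point (x, f u) of lift(f), so slicing
    lift(f) at height f(u) yields the last inclusion. *)
From HB Require Import structures.
From mathcomp Require Import all_boot all_order all_algebra.
From mathcomp Require Import all_classical all_reals all_analysis.
From mathcomp Require Import ring lra.
Import Order.TTheory GRing.Theory Num.Theory.
Local Open Scope classical_set_scope.
Local Open Scope ring_scope.
Set Implicit Arguments. Unset Strict Implicit.

Section NormalConeTransfer.
Variable R : realType.

Lemma pt_inj d (x x' : 'rV[R]_d) (y y' : R) :
  pt x y = pt x' y' -> x = x' /\ y = y'.
Proof.
by case/eq_row_mx=> -> /rowP/(_ 0); rewrite !mxE => ->.
Qed.

Lemma ptE d (z : 'rV[R]_(d + 1)) : z = pt (Pd z) (rsubmx z 0 0).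
Proof.
rewrite -{1}(hsubmxK z) /Pd /pt; congr row_mx.
by apply/rowP => j; rewrite mxE (ord1 j).
Qed.

Lemma ptB d (x x' : 'rV[R]_d) (y y' : R) :
  pt x y - pt x' y' = pt (x - x') (y - y').
Proof.
rewrite /pt opp_row_mx add_row_mx; congr row_mx.
by apply/rowP => j; rewrite !mxE.
Qed.

Lemma dotv_pt d (x x' : 'rV[R]_d) (y y' : R) :
  dotv (pt x y) (pt x' y') = dotv x x' + y * y'.
Proof.
rewrite /dotv big_split_ord /= big_ord1; congr (_ + _).
  by apply: eq_bigr => i _; rewrite /pt !row_mxEl.
by rewrite /pt !row_mxEr !mxE.
Qed.

Lemma dotvv_ge0 d (x : 'rV[R]_d) : 0 <= dotv x x.
Proof. by apply: sumr_ge0 => i _; rewrite -expr2 sqr_ge0. Qed.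

Lemma enorm_pt d (x : 'rV[R]_d) (y : R) :
  enorm (pt x y) = Num.sqrt (dotv x x + y ^+ 2).
Proof. by rewrite /enorm dotv_pt expr2. Qed.

Lemma enorm_pt0 d (x : 'rV[R]_d) : enorm (pt x 0) = enorm x.
Proof. by rewrite enorm_pt expr0n addr0. Qed.

Lemma normr_le_enorm_pt d (x : 'rV[R]_d) (y : R) : `|y| <= enorm (pt x y).
Proof.
rewrite enorm_pt -sqrtr_sqr ler_sqrt ?lerDr ?dotvv_ge0 //.
by rewrite addr_ge0 ?dotvv_ge0 ?sqr_ge0.
Qed.

Lemma enorm_pt_le d (x : 'rV[R]_d) (y y' L : R) :
  1 <= L -> `|y| <= L * `|y'| -> enorm (pt x y) <= L * enorm (pt x y').
Proof.
move=> L1 yy'; have L0 : 0 <= L by lra.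
have Q0 := dotvv_ge0 x.
rewrite !enorm_pt -[L in L * _]ger0_norm // -sqrtr_sqr -sqrtrM ?sqr_ge0 //.
rewrite ler_sqrt; last by rewrite mulr_ge0 ?sqr_ge0 // addr_ge0 // sqr_ge0.
have y2 : y ^+ 2 <= L ^+ 2 * y' ^+ 2.
  rewrite -(real_normK (num_real y)) -(real_normK (num_real y')) -exprMn.
  by rewrite ler_pXn2r ?nnegrE ?mulr_ge0.
have Q2 : dotv x x <= L ^+ 2 * dotv x x by rewrite ler_peMl //; nra.
nra.
Qed.

Lemma Taylor1_lipschitz (g : R -> R) (s0 t0 k K r y : R) :
  `|y - s0| <= r ->
  `|g y - t0 - k * (y - s0)| <= K * (y - s0) ^+ 2 ->
  `|g y - t0| <= (`|k| + `|K| * r) * `|y - s0|.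
Proof.
move=> ys0_r rem.
have -> : g y - t0 = (g y - t0 - k * (y - s0)) + k * (y - s0) by ring.
have Kr : `|K| * (y - s0) ^+ 2 <= `|K| * r * `|y - s0|.
  by rewrite -real_normK ?num_real // expr2 mulrA ler_wpM2r // ler_wpM2l.
have KK : K * (y - s0) ^+ 2 <= `|K| * (y - s0) ^+ 2.
  by rewrite ler_wpM2r ?sqr_ge0 ?ler_norm.
apply: le_trans (ler_normD _ _) _; rewrite normrM mulrDl; lra.
Qed.

(** [k] is the derivative of [g] at [s0]; normal cones are transported by
    the transpose of the derivative of (x, y) |-> (x, g y). *)
Lemma normal_cone_transfer d (A B : set 'rV[R]_(d + 1)) (u w : 'rV[R]_d)
    (g : R -> R) (s0 t0 k K r nu : R) :
  0 < r ->
  (forall x y, B (pt x y) -> `|y - s0| <= r -> A (pt x (g y))) ->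
  (forall y, `|y - s0| <= r -> `|g y - t0 - k * (y - s0)| <= K * (y - s0) ^+ 2) ->
  normal_cone A (pt u t0) (pt w nu) ->
  normal_cone B (pt u s0) (pt w (k * nu)).
Proof.
move=> r0 BA gTaylor wnuA eps eps0.
pose L := `|k| + `|K| * r + 1; pose M := `|nu| * `|K| + 1.
have L1 : 1 <= L by rewrite /L lerDr addr_ge0 ?mulr_ge0 // ltW.
have M0 : 0 < M by rewrite /M ltr_pwDr // mulr_ge0.
have epsL0 : 0 < eps / (2 * L) by rewrite divr_gt0 ?mulr_gt0 //; lra.
have [delA delA0 HA] := wnuA _ epsL0.
pose del := Num.min r (Num.min (delA / L) (eps / (2 * M))).
have [del_r del_A del_eps] : [/\ del <= r, del <= delA / L & del <= eps / (2 * M)].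
  by rewrite /del !ge_min !lexx !orbT.
exists del; first by rewrite /del !lt_min r0 !divr_gt0 ?mulr_gt0 //; lra.
move=> z; rewrite (ptE z); move: (Pd z) (rsubmx z 0 0) => x y Bxy.
rewrite !ptB dotv_pt; set N := enorm _ => N_del.
have ys0_N : `|y - s0| <= N by apply: normr_le_enorm_pt.
have ys0_r : `|y - s0| <= r by lra.
set e := g y - t0 - k * (y - s0).
have rem : `|e| <= K * (y - s0) ^+ 2 := gTaylor y ys0_r.
have gN : enorm (pt (x - u) (g y - t0)) <= L * N.
  apply: enorm_pt_le => //; apply: le_trans (Taylor1_lipschitz ys0_r rem) _.
  by rewrite ler_wpM2r ?lerDl.
have LN : L * N <= delA.
  have : L * del <= delA by rewrite -ler_pdivlMl //; lra.
  have : L * N <= L * del by rewrite ler_pM2l //; lra.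
  lra.
have wA : dotv w (x - u) + nu * (g y - t0) <= eps / 2 * N.
  have := HA _ (BA x y Bxy ys0_r); rewrite ptB dotv_pt => /(_ (le_trans gN LN)).
  move/le_trans; apply.
  have -> : eps / 2 * N = eps / (2 * L) * (L * N) by field; lra.
  by rewrite ler_wpM2l // ltW.
have err : `|nu * e| <= eps / 2 * N.
  have N0 : 0 <= N by apply: le_trans ys0_N.
  have e1 : `|nu * e| <= `|nu| * `|K| * (N * del).
    rewrite normrM -mulrA ler_wpM2l //; apply: (le_trans rem).
    apply: le_trans (_ : `|K| * (y - s0) ^+ 2 <= _).
      by rewrite ler_wpM2r ?sqr_ge0 ?ler_norm.
    by rewrite ler_wpM2l // -real_normK ?num_real // expr2 ler_pM //; lra.
  have e2 : M * del <= eps / 2.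
    by move: del_eps; rewrite ler_pdivlMr ?mulr_gt0 // mulrCA -ler_pdivlMl //; lra.
  have e3 : N * (M * del) <= N * (eps / 2) by rewrite ler_wpM2l.
  have : 0 <= N * del by rewrite mulr_ge0 //; lra.
  rewrite /M in e3; nra.
have -> : dotv w (x - u) + k * nu * (y - s0) =
  dotv w (x - u) + nu * (g y - t0) - nu * e by rewrite /e; ring.
have := ler_norm (- (nu * e)); rewrite normrN; lra.
Qed.

Lemma normal_cone_slice d (B : set 'rV[R]_(d + 1)) (S : set 'rV[R]_d)
    (u w : 'rV[R]_d) (s0 nu : R) :
  (forall x, S x -> B (pt x s0)) ->
  normal_cone B (pt u s0) (pt w nu) -> normal_cone S u w.
Proof.
move=> SB wnuB eps eps0; have [del del0 HB] := wnuB eps eps0.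
exists del => // x Sx xu_del.
have := HB (pt x s0) (SB x Sx).
by rewrite ptB subrr dotv_pt mulr0 addr0 enorm_pt0; apply.
Qed.

Lemma expRN_taylor_remainder (c xi : R) : 0 < c -> `|xi + ln c| <= 1 / 2 ->
  `|expR (- xi) - c - - c * (xi + ln c)| <= 2 * c * (xi + ln c) ^+ 2.
Proof.
move=> c0; set t := xi + ln c; rewrite ler_norml => t_small.
have -> : expR (- xi) - c - - c * t = c * (expR (- t) - (1 - t)).
  have -> : - xi = - t + ln c by rewrite /t; ring.
  by rewrite expRD lnK ?posrE //; ring.
rewrite normrM gtr0_norm // -mulrA mulrCA ler_pM2l //.
have lb := expR_ge1Dx (- t); have ub := expR_ge1Dx t.
have inv : expR (- t) * expR t = 1 by rewrite -expRD addNr expR0.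
have pos := expR_gt0 (- t).
rewrite ger0_norm; last by lra.
(* e^(-t) <= 1/(1+t), so the remainder is at most t^2/(1+t) *)
have : (expR (- t) - (1 - t)) * (1 + t) <= t ^+ 2 by nra.
nra.
Qed.

Lemma oppln_taylor_remainder (c y : R) : 0 < c -> `|y - c| <= c / 2 ->
  `|- ln y - - ln c - - c^-1 * (y - c)| <= 2 / c ^+ 2 * (y - c) ^+ 2.
Proof.
move=> c0; rewrite ler_norml => y_near; pose r := y / c.
have r_ge : 1 / 2 <= r by rewrite /r ler_pdivlMr //; lra.
have r0 : 0 < r by lra.
have -> : - ln y - - ln c - - c^-1 * (y - c) = (r - 1) - ln r.
  by rewrite /r ln_div ?posrE //; [field; rewrite gt_eqF | lra].
have -> : 2 / c ^+ 2 * (y - c) ^+ 2 = 2 * (r - 1) ^+ 2.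
  by rewrite /r; field; rewrite gt_eqF.
(* 1 - 1/r <= ln r <= r - 1 *)
have ub := expR_ge1Dx (ln r); rewrite lnK ?posrE // in ub.
have lb := expR_ge1Dx (- ln r); rewrite expRN lnK ?posrE // in lb.
have rlb : r * (1 - ln r) <= 1.
  by have := ler_wpM2l (ltW r0) lb; rewrite mulfV // gt_eqF.
rewrite ger0_norm; last by lra.
nra.
Qed.

Lemma liftf_epigraph_psi d (f : 'rV[R]_d -> R) (x : 'rV[R]_d) (y : R) :
  liftf f (pt x y) -> 0 < y -> epigraph (psi_of f) (pt x (- ln y)).
Proof.
move=> [_ [_ [/pt_inj [<- <-] [_ yfx]]]] y0.
have fx0 : 0 < f x by apply: lt_le_trans yfx; rewrite gtr0_norm.
exists x, (- ln y); split => //; rewrite /psi_of fx0; split; first exact: ltry.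
by rewrite lee_fin lerN2 ler_ln ?posrE // -(gtr0_norm y0).
Qed.

Lemma epigraph_psi_liftf d (f : 'rV[R]_d -> R) (x : 'rV[R]_d) (xi : R) :
  epigraph (psi_of f) (pt x xi) -> liftf f (pt x (expR (- xi))).
Proof.
move=> [_ [_ [/pt_inj [<- <-] [psi_fin psi_le]]]].
have fx0 : 0 < f x by move: psi_fin; rewrite /psi_of; case: ifP.
move: psi_le; rewrite /psi_of fx0 lee_fin => psi_le.
exists x, (expR (- xi)); split => //; split; first exact: subset_closure.
by rewrite gtr0_norm ?expR_gt0 // -[f x]lnK ?posrE // ler_expR lerNl.
Qed.

Lemma superlevel_liftf d (f : 'rV[R]_d -> R) (x : 'rV[R]_d) (t : R) :
  0 < t -> superlevel f t x -> liftf f (pt x t).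
Proof.
move=> t0 tfx; exists x, t; split => //; split; last by rewrite gtr0_norm.
by apply: subset_closure; apply: lt_le_trans tfx.
Qed.

End NormalConeTransfer.

Theorem mainTheorem7 (R : realType) (d : nat) (f : 'rV[R]_d -> R)
  (u v : 'rV[R]_d) (nu : R) :
  log_concave f -> usc_fun f -> supp_fun f u ->
  (normal_cone (epigraph (psi_of f)) (pt u (- ln (f u))) (pt v nu) <->
   normal_cone (liftf f) (pt u (f u)) (pt v (- nu / f u))) /\
  (@Pd R d @` normal_cone (liftf f) (pt u (f u))
     `<=` normal_cone (superlevel f (f u)) u).
Proof.
move=> _ _; rewrite /supp_fun /=; set c := f u => c0.
split; first split.
- have -> : - nu / c = - c^-1 * nu by rewrite mulrC mulrN mulNr.
  apply: (normal_cone_transfer (g := fun y => - ln y) (r := c / 2)).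
  + by rewrite divr_gt0.
  + move=> x y Lxy; rewrite ler_norml => y_near.
    by apply: liftf_epigraph_psi => //; lra.
  + by move=> y; apply: oppln_taylor_remainder.
- move=> Hlift; have -> : nu = - c * (- nu / c) by field; rewrite gt_eqF.
  apply: (normal_cone_transfer (g := fun xi => expR (- xi)) (r := 1 / 2)
    _ _ _ Hlift) => //.
  + by move=> x xi Exi _; apply: epigraph_psi_liftf.
  + by move=> xi; rewrite opprK; apply: expRN_taylor_remainder.
- move=> _ [z Nz <-].
  apply: (normal_cone_slice (B := liftf f) (s0 := c) (nu := rsubmx z 0 0)).
    by move=> x; apply: superlevel_liftf.
  by rewrite -ptE.
Qed.
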